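(* Let $\mathbf{k}$ be a field and $f\in\mathrm{Aut}(\mathbb{A}^2_{\mathbf{k}})$ an automorphism of affine length $\ell_A(f)=n+1$ with $n\ge0$. Then there exist $\tau_1,\tau_2\in B$ and $i_1,\dots,i_n\in I$ such that $f=\tau_1\circ\sigma\circ i_1\circ\sigma\circ\cdots\circ\sigma\circ i_n\circ\sigma\circ\tau_2$. In particular $f^{-1}=\tau_2^{-1}\circ\sigma\circ i_n\circ\sigma\circ\cdots\circ\sigma\circ i_1\circ\sigma\circ\tau_1^{-1}$.
   Context: $A=\{(ax+by+c,a'x+b'y+c'): ab'-a'b\neq0\}$, $B=\{(ax+p(y),b'y+c'): a,b'\in\mathbf{k}^*, c'\in\mathbf{k}, p\in\mathbf{k}[y]\}$ (affine and Jonquières subgroups of $\mathrm{Aut}(\mathbb{A}^2_{\mathbf{k}})$), $\sigma=(y,x)$, and $I=\{(-x+p(y),y): p\in\mathbf{k}[y],\ \deg p\ge2\}$. Every $f$ admits an expression $f=t_1\circ a_1\circ t_2\circ\cdots\circ a_m\circ t_{m+1}$ with $a_i\in A\setminus(A\cap B)$, $t_1,t_{m+1}\in B$, $t_2,\dots,t_m\in B\setminus(A\cap B)$; the number $m$ is uniquely determined by $f$ and is its affine length $\ell_A(f)$. *)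

From mathcomp Require Import all_boot all_algebra.
From mathcomp Require Import mpoly.
Set Implicit Arguments. Unset Strict Implicit. Unset Printing Implicit Defensive.
Import GRing.Theory.
Local Open Scope ring_scope.

Section A2.
Variable k : fieldType.

(* A polynomial endomorphism of A^2_k: a pair of polynomials in k[x,y],
   with x = 'X_0 and y = 'X_1. *)
Definition endo := ({mpoly k[2]} * {mpoly k[2]})%type.

Definition X : {mpoly k[2]} := 'X_(@ord0 1).
Definition Y : {mpoly k[2]} := 'X_(@ord_max 1).

Definition ecomp (f g : endo) : endo :=
  (f.1 \mPo [tuple g.1; g.2], f.2 \mPo [tuple g.1; g.2]).

Definition eid : endo := (X, Y).

Definition ecomp_list (s : seq endo) : endo := foldr ecomp eid s.

Definition is_inverse (f g : endo) : Prop := ecomp f g = eid /\ ecomp g f = eid.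

Definition is_aut (f : endo) : Prop := exists g, is_inverse f g.

Definition in_y (p : {poly k}) : {mpoly k[2]} := \sum_(i < size p) p`_i *: Y ^+ i.

Definition inA (f : endo) : Prop :=
  exists a b c a' b' c' : k, a * b' - a' * b != 0 /\
    f = (a *: X + b *: Y + c%:MP, a' *: X + b' *: Y + c'%:MP).

Definition inB (f : endo) : Prop :=
  exists (a b' c' : k) (p : {poly k}), a != 0 /\ b' != 0 /\
    f = (a *: X + in_y p, b' *: Y + c'%:MP).

Definition inI (f : endo) : Prop :=
  exists p : {poly k}, (2 <= (size p).-1)%N /\ f = (- X + in_y p, Y).

Definition sigma : endo := (Y, X).

(* f = t1 o a1 o t2 o ... o a_m o t_{m+1}, with t1 = t0 and the list
   ats = [(a1,t2); ...; (a_m, t_{m+1})]. *)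
Definition affine_decomp (f : endo) (t0 : endo) (ats : seq (endo * endo)) : Prop :=
  [/\ f = ecomp_list (t0 :: flatten (map (fun q : endo * endo => [:: q.1; q.2]) ats)),
      inB t0,
      (forall q, q \in ats -> inA q.1 /\ ~ inB q.1),
      (forall q, q \in behead (rev ats) -> inB q.2 /\ ~ inA q.2) &
      (forall q, last None (map Some ats) = Some q -> inB q.2)].

(* l_A(f) = m : f admits an expression as above with m affine factors
   (m is uniquely determined by f, as recalled in the paper). *)
Definition affine_length_is (f : endo) (m : nat) : Prop :=
  exists t0 ats, size ats = m /\ affine_decomp f t0 ats.

End A2.

From mathcomp Require Import all_boot all_algebra.
From mathcomp Require Import mpoly.
From mathcomp Require Import ring.
Set Implicit Arguments. Unset Strict Implicit. Unset Printing Implicit Defensive.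
Import GRing.Theory.
Local Open Scope ring_scope.

(* An affine map outside B factors as l ∘ σ ∘ r with l, r affine maps of B, and
   a Jonquières map (a x + p(y), b y + c) with deg p >= 2 factors as i ∘ e with
   i in I and e = (-a x, b y + c), for which σ ∘ e ∘ σ is again an affine map of B.
   Substituting these factorizations into t_1 a_1 t_2 ... a_m t_(m+1) and pushing
   the affine leftovers from left to right, each inner t_j keeps degree >= 2 and
   contributes one element of I.  Since σ and the elements of I are involutions,
   the inverse of σ i_1 σ ... i_n σ is the reversed word σ i_n σ ... i_1 σ. *)

Lemma comp_mpolyA (R : comNzRingType) (n m l : nat) (p : {mpoly R[n]})
    (lq : n.-tuple {mpoly R[m]}) (lr : m.-tuple {mpoly R[l]}) :
  (p \mPo lq) \mPo lr = p \mPo [tuple tnth lq i \mPo lr | i < n].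
Proof.
rewrite [p \mPo lq]comp_mpolyE raddf_sum /= [RHS]comp_mpolyE; apply: eq_bigr => m' _.
rewrite linearZ /= rmorph_prod; congr (_ *: _); apply: eq_bigr => i _.
by rewrite rmorphXn tnth_mktuple.
Qed.

Section Automorphisms.
Variable k : fieldType.

Local Notation σ := (sigma k).
(* Composition is locked: otherwise every failed match of a rewrite rule against
   a composite unfolds it into polynomial substitution, which is very costly. *)
Fact comp_key : unit. Proof. by []. Qed.
Definition comp : endo k -> endo k -> endo k := locked_with comp_key (@ecomp k).
Local Notation "f ∘ g" := (comp f g) (at level 41, right associativity).

Lemma compE : comp = @ecomp k.
Proof. exact: locked_withE. Qed.

Definition comp_list : seq (endo k) -> endo k := foldr comp (eid k).

Lemma ecomp_listE : @ecomp_list k = comp_list.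
Proof. by rewrite /comp_list compE. Qed.

Lemma compA (f g h : endo k) : (f ∘ g) ∘ h = f ∘ g ∘ h.
Proof.
rewrite compE /ecomp /= !comp_mpolyA.
have -> : [tuple tnth [tuple g.1; g.2] i \mPo [tuple h.1; h.2] | i < 2] =
          [tuple g.1 \mPo [tuple h.1; h.2]; g.2 \mPo [tuple h.1; h.2]].
  by apply: eq_from_tnth => i; rewrite tnth_mktuple; case: i => [[|[|]]].
by [].
Qed.

Lemma comp_eidl (f : endo k) : eid k ∘ f = f.
Proof. by case: f => f1 f2; rewrite compE /ecomp /= /X /Y !comp_mpolyXU. Qed.

Lemma comp_eidr (f : endo k) : f ∘ eid k = f.
Proof.
case: f => f1 f2; rewrite compE /ecomp /eid /=.
have -> : [tuple X k; Y k] = [tuple 'X_i | i < 2].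
  apply: eq_from_tnth => i; rewrite tnth_mktuple.
  by case: i => [[|[|]]] //= ?; rewrite /X /Y; congr 'X__; apply: val_inj.
by rewrite !comp_mpoly_id.
Qed.

Lemma comp_list_cat (s1 s2 : seq (endo k)) :
  comp_list (s1 ++ s2) = comp_list s1 ∘ comp_list s2.
Proof. by elim: s1 => [|f s IHs] /=; rewrite ?comp_eidl // IHs compA. Qed.

Lemma left_inverse_eq (f g h : endo k) : h ∘ f = eid k -> f ∘ g = eid k -> g = h.
Proof. by move=> hf fg; rewrite -[g]comp_eidl -hf compA fg comp_eidr. Qed.

Lemma sigmaE (h : endo k) : σ ∘ h = (h.2, h.1).
Proof. by case: h => h1 h2; rewrite compE /ecomp /sigma /X /Y !comp_mpolyXU. Qed.

Lemma sigmaKl (h : endo k) : σ ∘ σ ∘ h = h.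
Proof. by rewrite -compA sigmaE comp_eidl. Qed.

Definition peval (p : {poly k}) (v : {mpoly k[2]}) := (map_poly (@mpolyC 2 k) p).[v].

Lemma pevalE p v : peval p v = \sum_(i < size p) p`_i *: v ^+ i.
Proof.
rewrite /peval horner_coef size_map_poly; apply: eq_bigr => i _.
by rewrite coef_map mul_mpolyC.
Qed.

Lemma in_yE p : in_y p = peval p (Y k).
Proof. by rewrite pevalE. Qed.

Lemma comp_in_y p (u v : {mpoly k[2]}) : in_y p \mPo [tuple u; v] = peval p v.
Proof.
rewrite pevalE /in_y raddf_sum /=; apply: eq_bigr => i _.
by rewrite linearZ /= rmorphXn /= /Y comp_mpolyXU.
Qed.

Lemma peval_comp p q v : peval (p \Po q) v = peval p (peval q v).
Proof. by rewrite /peval map_comp_poly horner_comp. Qed.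

Lemma peval_lin a p q v : peval (a *: p + q) v = a *: peval p v + peval q v.
Proof. by rewrite /peval rmorphD /= hornerD linearZ /= hornerZ mul_mpolyC. Qed.

Lemma peval_affine b c v : peval (b *: 'X + c%:P) v = b *: v + c%:MP.
Proof.
by rewrite /peval rmorphD /= linearZ /= map_polyX map_polyC hornerD hornerZ hornerX
  hornerC mul_mpolyC.
Qed.

Lemma peval_polyC c v : peval c%:P v = c%:MP.
Proof. by rewrite /peval map_polyC hornerC. Qed.

Lemma in_y_affine b c : in_y (b *: 'X + c%:P) = b *: Y k + c%:MP.
Proof. by rewrite in_yE peval_affine. Qed.

Lemma size_affine_poly (b c : k) : (size (b *: 'X + c%:P)%R <= 2)%N.
Proof.
apply: leq_trans (size_polyD _ _) _; rewrite geq_max.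
by rewrite (leq_trans (size_scale_leq _ _)) ?size_polyX ?(leq_trans (size_polyC_leq1 _)).
Qed.

Lemma size_affine_poly_neq0 (b c : k) : b != 0 -> size (b *: 'X + c%:P) = 2.
Proof.
by move=> b0; rewrite -mul_polyC size_MXaddC polyC_eq0 (negbTE b0) size_polyC b0.
Qed.

Lemma size_comp_affine_le2 (p : {poly k}) b c :
  (size p <= 2)%N -> (size (p \Po (b *: 'X + c%:P))%R <= 2)%N.
Proof.
move=> sp; apply: leq_trans (size_comp_poly_leq _ _) _; rewrite ltnS.
have sq := size_affine_poly b c.
by apply: (leq_trans (leq_mul (_ : _ <= 1) (_ : _ <= 1))%N); rewrite // -subn1 leq_subLR.
Qed.

Lemma poly_size_le2 (p : {poly k}) : (size p <= 2)%N -> p = p`_1 *: 'X + (p`_0)%:P.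
Proof.
move=> sp; apply/polyP => -[|[|i]];
  rewrite coefD coefZ coefX coefC ?mulr0 ?mulr1 ?add0r ?addr0 //.
by rewrite nth_default // (leq_trans sp).
Qed.

Definition jonq (a b c : k) (p : {poly k}) : endo k :=
  (a *: X k + in_y p, b *: Y k + c%:MP).

Lemma jonq_compE a b c p (h : endo k) :
  jonq a b c p ∘ h = (a *: h.1 + peval p h.2, b *: h.2 + c%:MP).
Proof.
case: h => h1 h2.
rewrite compE /ecomp /jonq /= !raddfD /= !linearZ /= comp_in_y.
by rewrite /X /Y !comp_mpolyXU comp_mpolyC.
Qed.

Lemma jonq_comp a1 b1 c1 p1 a2 b2 c2 p2 :
  jonq a1 b1 c1 p1 ∘ jonq a2 b2 c2 p2 =
  jonq (a1 * a2) (b1 * b2) (b1 * c2 + c1) (a1 *: p2 + (p1 \Po (b2 *: 'X + c2%:P))).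
Proof.
rewrite jonq_compE /jonq /= !in_yE peval_lin peval_comp peval_affine.
by congr (_, _); rewrite -!mul_mpolyC ?mpolyCM ?mpolyCD; ring.
Qed.

Definition jonq_with (P : nat -> bool) (f : endo k) :=
  exists (a b c : k) (p : {poly k}), [/\ a != 0, b != 0, P (size p) & f = jonq a b c p].

(* [size p <= 2] means [deg p <= 1]: these are the affine elements of B. *)
Definition inBaff := jonq_with (fun s => s <= 2)%N.
Definition inBnaff := jonq_with (fun s => 3 <= s)%N.

Lemma jonq_with_inB P (f : endo k) : jonq_with P f -> inB f.
Proof. by case=> a [b [c [p [a0 b0 _ ->]]]]; exists a, b, c, p. Qed.

Lemma inB_comp (f g : endo k) : inB f -> inB g -> inB (f ∘ g).
Proof.
case=> a1 [b1 [c1 [p1 [a10 [b10 ->]]]]] [a2 [b2 [c2 [p2 [a20 [b20 ->]]]]]].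
by rewrite jonq_comp; do 4 eexists; do !split; rewrite ?mulf_neq0.
Qed.

Lemma inBaff_naff_comp (f g : endo k) : inBaff f -> inBnaff g -> inBnaff (f ∘ g).
Proof.
case=> a1 [b1 [c1 [p1 [a10 b10 s1 ->]]]] [a2 [b2 [c2 [p2 [a20 b20 s2 ->]]]]].
rewrite jonq_comp; do 4 eexists; split; last by []; rewrite ?mulf_neq0 //.
by rewrite size_polyDl size_scale // (leq_ltn_trans (size_comp_affine_le2 _ _ s1)).
Qed.

Lemma inBnaff_aff_comp (f g : endo k) : inBnaff f -> inBaff g -> inBnaff (f ∘ g).
Proof.
case=> a1 [b1 [c1 [p1 [a10 b10 s1 ->]]]] [a2 [b2 [c2 [p2 [a20 b20 s2 ->]]]]].
rewrite jonq_comp; do 4 eexists; split; last by []; rewrite ?mulf_neq0 //.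
rewrite addrC size_polyDl size_comp_poly2 ?size_affine_poly_neq0 //.
exact: leq_ltn_trans (leq_trans (size_scale_leq _ _) s2) s1.
Qed.

Lemma inBnaff_notA (t : endo k) : inB t -> ~ inA t -> inBnaff t.
Proof.
case=> a [b [c [p [a0 [b0 ->]]]]] tNA.
have [sp|sp] := leqP 3 (size p); first by exists a, b, c, p.
case: tNA; exists a, p`_1, p`_0, 0, b, c; split; first by rewrite mul0r subr0 mulf_neq0.
by rewrite /jonq {1}(poly_size_le2 sp) in_y_affine scale0r add0r addrA.
Qed.

Lemma inA_notB_factor (a : endo k) : inA a -> ~ inB a ->
  exists l r, [/\ inBaff l, inBaff r & a = l ∘ σ ∘ r].
Proof.
case=> a1 [b1 [c1 [a2 [b2 [c2 [det_neq0 ->]]]]]] aNB.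
have a2_neq0 : a2 != 0.
  apply: contra_notN aNB => /eqP a2_0; move: det_neq0.
  rewrite a2_0 mul0r subr0 mulf_eq0 negb_or => /andP[a1_neq0 b2_neq0].
  exists a1, b2, c2, (b1 *: 'X + c1%:P); split => //; split => //.
  by rewrite /jonq in_y_affine scale0r add0r addrA.
have [e a1E] : exists e, a1 = e * a2 by exists (a1 / a2); rewrite divfK.
exists (jonq (b1 - e * b2) 1 0 (e *: 'X + (c1 - e * c2)%:P)),
       (jonq a2 1 0 (b2 *: 'X + c2%:P)).
split.
- exists (b1 - e * b2), 1, 0, (e *: 'X + (c1 - e * c2)%:P).
  split; rewrite ?oner_neq0 ?size_affine_poly //.
  apply: contraNneq det_neq0 => /eqP; rewrite subr_eq0 => /eqP b1E.
  by rewrite a1E b1E; apply/eqP; ring.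
- by exists a2, 1, 0, (b2 *: 'X + c2%:P); split; rewrite ?oner_neq0 ?size_affine_poly.
rewrite sigmaE jonq_compE /jonq /= !in_y_affine peval_affine a1E.
congr (_, _); rewrite -!mul_mpolyC ?mpolyC0 ?mpolyC1 ?mpolyCM ?mpolyCD ?mpolyCN ?mpolyCB;
  by ring.
Qed.

Lemma comp_poly_affineK (b c : k) : b != 0 ->
  (b^-1 *: 'X + (- (c / b))%:P) \Po (b *: 'X + c%:P) = 'X.
Proof.
move=> b0; rewrite comp_polyD comp_polyC comp_polyZ comp_polyX scalerDr scalerA mulVf //.
by rewrite scale1r scale_polyC -addrA -polyCD mulrC addrN addr0.
Qed.

Lemma I_map_jonq p : (- X k + in_y p, Y k) = jonq (-1) 1 0 p.
Proof. by rewrite /jonq scaleN1r scale1r addr0. Qed.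

Lemma inBnaff_factor (t : endo k) : inBnaff t ->
  exists i e, [/\ inI i, t = i ∘ e & inBaff (σ ∘ e ∘ σ)].
Proof.
case=> a [b [c [p [a0 b0 sp ->]]]].
pose q := p \Po (b^-1 *: 'X + (- (c / b))%:P).
have sq : size q = size p by rewrite size_comp_poly2 // size_affine_poly_neq0 // invr_eq0.
exists (jonq (-1) 1 0 q), (jonq (-a) b c 0); split.
- by exists q; rewrite I_map_jonq sq; split; first by case: (size p) sp => [|[|[|]]].
- rewrite jonq_comp scaler0 add0r -comp_polyA comp_poly_affineK // comp_polyXr.
  by rewrite mulN1r opprK !mul1r addr0.
exists b, (- a), 0, c%:P; split; rewrite ?oppr_eq0 ?(leq_trans (size_polyC_leq1 _)) //.
by rewrite jonq_compE sigmaE /= /sigma /jonq in_yE !peval_polyC /= mpolyC0 addr0.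
Qed.

Lemma inI_involutive (j : endo k) : inI j -> j ∘ j = eid k.
Proof.
case=> p [_ ->]; rewrite I_map_jonq jonq_comp mulN1r opprK !mul1r.
rewrite scale1r polyC0 !addr0 comp_polyXr scaleN1r addNr.
by rewrite /jonq in_yE peval_polyC mpolyC0 !addr0 !scale1r.
Qed.

Definition alt_word (js : seq (endo k)) :=
  comp_list (flatten (map (fun i => [:: i; σ]) js)).

Lemma alt_word_cons (j : endo k) js : alt_word (j :: js) = j ∘ σ ∘ alt_word js.
Proof. by []. Qed.

Lemma alt_word_rcons js (j : endo k) : alt_word (rcons js j) = alt_word js ∘ j ∘ σ.
Proof. by rewrite /alt_word -cats1 map_cat flatten_cat comp_list_cat /= comp_eidr. Qed.

Lemma ecomp_list_alt_word (t1 t2 : endo k) js :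
  ecomp_list (t1 :: σ :: flatten (map (fun i => [:: i; σ]) js) ++ [:: t2]) =
  t1 ∘ σ ∘ alt_word js ∘ t2.
Proof. by rewrite ecomp_listE /= comp_list_cat /= comp_eidr. Qed.

Lemma alt_word_rev_sigma (js : seq (endo k)) : (forall i, i \in js -> inI i) ->
  alt_word (rev js) ∘ σ ∘ alt_word js = σ.
Proof.
elim: js => [|j js IHjs] js_I; first by rewrite /alt_word /= comp_eidl comp_eidr.
have jI : inI j by apply: js_I; rewrite mem_head.
rewrite rev_cons alt_word_rcons alt_word_cons !compA sigmaKl.
rewrite -(compA j) (inI_involutive jI) comp_eidl IHjs // => i ji.
by apply: js_I; rewrite inE ji orbT.
Qed.

Lemma alt_word_inverse (t1 t2 t1' t2' g : endo k) (js : seq (endo k)) :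
  (forall i, i \in js -> inI i) -> is_inverse t1 t1' -> is_inverse t2 t2' ->
  is_inverse (t1 ∘ σ ∘ alt_word js ∘ t2) g ->
  g = t2' ∘ σ ∘ alt_word (rev js) ∘ t1'.
Proof.
rewrite /is_inverse -compE => js_I [_ t1K] [_ t2K] [fg _]; apply: left_inverse_eq fg.
rewrite !compA -(compA t1') t1K comp_eidl.
by rewrite -(compA σ _ t2) -(compA (alt_word (rev js))) alt_word_rev_sigma // sigmaKl.
Qed.

Definition pair_word (ats : seq (endo k * endo k)) :=
  comp_list (flatten (map (fun q : endo k * endo k => [:: q.1; q.2]) ats)).

Lemma pair_word_cons (a t : endo k) ats :
  pair_word ((a, t) :: ats) = a ∘ t ∘ pair_word ats.
Proof. by []. Qed.

Fixpoint alternating (ats : seq (endo k * endo k)) : Prop :=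
  if ats is (a, t) :: r then
    [/\ inA a /\ ~ inB a, inB t, (if r is [::] then True else ~ inA t) & alternating r]
  else True.

Lemma behead_rev_cons (T : eqType) (x : T) (s : seq T) :
  {subset behead (rev s) <= behead (rev (x :: s))}.
Proof.
by rewrite rev_cons; case: (rev s) => //= y t z zt; rewrite mem_rcons inE zt orbT.
Qed.

Lemma mem_behead_rev (T : eqType) (x y : T) (s : seq T) :
  x \in behead (rev (x :: y :: s)).
Proof. by rewrite !rev_cons; case: (rev s) => [|z t] /=; rewrite ?mem_rcons mem_head. Qed.

Lemma alternating_decomp (ats : seq (endo k * endo k)) :
  (forall q, q \in ats -> inA q.1 /\ ~ inB q.1) ->
  (forall q, q \in behead (rev ats) -> inB q.2 /\ ~ inA q.2) ->
  (forall q, last None (map Some ats) = Some q -> inB q.2) ->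
  alternating ats.
Proof.
elim: ats => [//|[a t] r IHr] ats_A ats_B ats_last /=.
have tB_nA : r != [::] -> inB t /\ ~ inA t.
  case: r {IHr ats_A ats_last} ats_B => // q r ats_B _.
  by apply: (ats_B (a, t)); apply: mem_behead_rev.
split.
- by apply: (ats_A (a, t)); rewrite mem_head.
- case: r tB_nA ats_last {IHr ats_A ats_B} => [|q r] tB_nA ats_last.
    exact: (ats_last (a, t)).
  by case: tB_nA.
- by case: r tB_nA {IHr ats_A ats_B ats_last} => // q r [].
- apply: IHr => [q qr|q qr|q q_last].
  + by apply: ats_A; rewrite inE qr orbT.
  + by apply: ats_B; apply: behead_rev_cons.
  + by apply: ats_last; case: r q_last {ats_A ats_B tB_nA}.
Qed.

Definition jonq_prefix (ats : seq (endo k * endo k)) (g : endo k) : Prop :=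
  if ats is [::] then inB g else inBnaff g.

Lemma alternating_cons_factor (a t : endo k) ats : alternating ((a, t) :: ats) ->
  exists l h, [/\ inBaff l, jonq_prefix ats h & a ∘ t = l ∘ σ ∘ h].
Proof.
case=> [[aA aNB] tB tNA] _.
have [l [r [l_aff r_aff ->]]] := inA_notB_factor aA aNB.
exists l, (r ∘ t); split => //; last by rewrite !compA.
case: ats tNA => [|q ats] tNA; first exact: inB_comp (jonq_with_inB r_aff) tB.
exact: inBaff_naff_comp r_aff (inBnaff_notA tB tNA).
Qed.

(* The accumulated prefix [g] absorbs the affine triangular leftovers: it is in
   B at the end of the word and of degree >= 2 before an affine letter. *)
Lemma alternating_alt_word (ats : seq (endo k * endo k)) (g : endo k) :
  alternating ats -> jonq_prefix ats g ->
  exists tau js, [/\ inB tau, size js = size ats, (forall i, i \in js -> inI i) &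
    g ∘ pair_word ats = alt_word js ∘ tau].
Proof.
elim: ats g => [|[a t] r IHr] g.
  move=> _ gB; exists g, [::]; split; [exact: gB | by [] | by [] |].
  by change (g ∘ eid k = eid k ∘ g); rewrite comp_eidl comp_eidr.
move=> alt_at g_naff; have alt_r : alternating r by case: alt_at.
have [l [h [l_aff h_ok atE]]] := alternating_cons_factor alt_at.
have [i [e [iI gl_ie e_aff]]] := inBnaff_factor (inBnaff_aff_comp g_naff l_aff).
have g'_ok : jonq_prefix r ((σ ∘ e ∘ σ) ∘ h).
  case: r h_ok {IHr alt_at alt_r g_naff} => [|q r] h_ok.
    exact: inB_comp (jonq_with_inB e_aff) h_ok.
  exact: inBaff_naff_comp e_aff h_ok.
have [tau [js [tauB size_js js_I g'E]]] := IHr _ alt_r g'_ok.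
exists tau, (i :: js); split; [exact: tauB | by rewrite /= size_js | |].
  by move=> j; rewrite inE => /orP[/eqP-> //|]; apply: js_I.
rewrite alt_word_cons !compA -g'E !compA sigmaKl.
by rewrite pair_word_cons -(compA a) atE !compA -(compA g) gl_ie !compA.
Qed.

Lemma affine_decomp_alt_word (f t0 : endo k) (ats : seq (endo k * endo k)) :
  affine_decomp f t0 ats -> ats != [::] ->
  exists tau1 tau2 js, [/\ inB tau1, inB tau2, size js = (size ats).-1,
    (forall i, i \in js -> inI i) & f = tau1 ∘ σ ∘ alt_word js ∘ tau2].
Proof.
case=> fE t0B ats_A ats_B ats_last.
have := alternating_decomp ats_A ats_B ats_last.
case: ats fE {ats_A ats_B ats_last} => // -[a t] r fE alt_at _.
have alt_r : alternating r by case: alt_at.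
have [l [h [l_aff h_ok atE]]] := alternating_cons_factor alt_at.
have [tau2 [js [tau2B size_js js_I hE]]] := alternating_alt_word alt_r h_ok.
exists (t0 ∘ l), tau2, js; split => //; first exact: inB_comp t0B (jonq_with_inB l_aff).
have -> : f = t0 ∘ pair_word ((a, t) :: r) by rewrite fE ecomp_listE.
by rewrite pair_word_cons -(compA a) atE !compA -hE.
Qed.

End Automorphisms.

Unset Implicit Arguments.

Theorem proposition4p10 (k : fieldType) (f : endo k) (n : nat) :
  is_aut f -> affine_length_is f n.+1 ->
  exists (tau1 tau2 : endo k) (js : seq (endo k)),
    [/\ inB tau1, inB tau2, size js = n, (forall i, i \in js -> inI i) &
    f = ecomp_list (tau1 :: sigma k
          :: flatten (map (fun i => [:: i; sigma k]) js) ++ [:: tau2])]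
    /\
    (* in particular: *)
    (forall tau1' tau2' g : endo k,
       is_inverse tau1 tau1' -> is_inverse tau2 tau2' -> is_inverse f g ->
       g = ecomp_list (tau2' :: sigma k
             :: flatten (map (fun i => [:: i; sigma k]) (rev js)) ++ [:: tau1'])).
Proof.
move=> _ [t0 [ats [size_ats f_decomp]]].
have [|tau1 [tau2 [js [tau1B tau2B size_js js_I fE]]]] := affine_decomp_alt_word f_decomp.
  by rewrite -size_eq0 size_ats.
rewrite size_ats in size_js.
exists tau1, tau2, js; split; first by split; rewrite // ecomp_list_alt_word.
move=> tau1' tau2' g tau1_inv tau2_inv f_inv.
rewrite ecomp_list_alt_word; apply: alt_word_inverse js_I tau1_inv tau2_inv _.
by rewrite -fE.
Qed.
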